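(* Let $(A,B)$ be controllable. There is $\bar\beta\ge0$ depending only on $A,B,\mu_f,l_f,\mu_g,l_g,\bar\theta$ (in particular not on $N$) such that for every $Q\in\mathcal Q$, $R\in\mathcal R$ and $\theta$ with $\|\theta\|\le\bar\theta$, the vector $\beta^e=F(Q,R)\theta$ satisfies $\max(\bar\theta,\|\beta^e\|)\le\bar\beta$.
   Context: Fix $\mu_f,\mu_g>0$, $0<l_f,l_g<\infty$. $P^e(Q,R)$ denotes the positive definite solution of the DARE $P=Q+A^\top(P-PB(B^\top PB+R)^{-1}B^\top P)A$. $\mathcal Q=\{Q:\mu_fI_n\le Q\le l_fI_n\}$, $\mathcal R=\{R:\mu_gI_m\le R\le l_gI_m\}$. With $P^e=P^e(Q,R)$ and $K^e=(R+B^\top P^eB)^{-1}B^\top P^eA$, $F(Q,R)=(P^e)^{-1}(I-(A-BK^e)^\top)^{-1}Q$ (so that $\frac12(x-\beta^e)^\top P^e(x-\beta^e)$ is a bias function of the average-cost problem with stage cost $\frac12(x-\theta)^\top Q(x-\theta)+\frac12u^\top Ru$). *)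

(* real numbers modelled by an arbitrary real closed field. *)
From HB Require Import structures.
From mathcomp Require Import all_boot all_order all_algebra.
Set Implicit Arguments. Unset Strict Implicit. Unset Printing Implicit Defensive.
Import Order.TTheory GRing.Theory Num.Theory.
Local Open Scope ring_scope.

Definition vnorm (R : rcfType) (n : nat) (x : 'cV[R]_n) : R :=
  Num.sqrt ((x^T *m x) 0 0).

Definition loewner_le (R : rcfType) (n : nat) (M1 M2 : 'M[R]_n) : Prop :=
  M1^T = M1 /\ M2^T = M2 /\
  forall x : 'cV[R]_n, 0 <= (x^T *m (M2 - M1) *m x) 0 0.

Definition posdef (R : rcfType) (n : nat) (P : 'M[R]_n) : Prop :=
  P^T = P /\ forall x : 'cV[R]_n, x != 0 -> 0 < (x^T *m P *m x) 0 0.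

Definition controllable (R : rcfType) (n m : nat)
    (A : 'M[R]_n) (B : 'M[R]_(n, m)) : Prop :=
  \rank (\mxrow_(i < n) (A ^+ i *m B)) = n.

(* The sets \mathcal Q and \mathcal R *)
Definition Qset (R : rcfType) (n : nat) (muf lf : R) (Q : 'M[R]_n) : Prop :=
  loewner_le (muf%:M) Q /\ loewner_le Q (lf%:M).

Definition DARE (R : rcfType) (n m : nat) (A : 'M[R]_n) (B : 'M[R]_(n, m))
    (Q : 'M[R]_n) (Rc : 'M[R]_m) (P : 'M[R]_n) : Prop :=
  P = Q + A^T *m (P - P *m B *m invmx (B^T *m P *m B + Rc) *m B^T *m P) *m A.

Definition is_Pe (R : rcfType) (n m : nat) (A : 'M[R]_n) (B : 'M[R]_(n, m))
    (Q : 'M[R]_n) (Rc : 'M[R]_m) (P : 'M[R]_n) : Prop :=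
  posdef P /\ DARE A B Q Rc P.

Definition Kgain (R : rcfType) (n m : nat) (A : 'M[R]_n) (B : 'M[R]_(n, m))
    (Rc : 'M[R]_m) (P : 'M[R]_n) : 'M[R]_(m, n) :=
  invmx (Rc + B^T *m P *m B) *m B^T *m P *m A.

Definition Fmap (R : rcfType) (n m : nat) (A : 'M[R]_n) (B : 'M[R]_(n, m))
    (Q : 'M[R]_n) (Rc : 'M[R]_m) (P : 'M[R]_n) : 'M[R]_n :=
  invmx P *m invmx (1%:M - (A - B *m Kgain A B Rc P)^T) *m Q.

From HB Require Import structures.
From mathcomp Require Import all_boot all_order all_algebra.
Import Order.TTheory GRing.Theory Num.Theory.
Local Open Scope ring_scope.
From mathcomp Require Import ring lra.

(* Write K = K^e and M = A - B K for the optimal closed loop.  The DARE is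
   equivalent to the Lyapunov identity  P = Q + M^T P M + K^T R K.  This
   identity shows that I - M^T (hence F(Q,R)) is invertible, and it gives a
   dissipation inequality for z = F(Q,R) theta: from (I - M^T) P z = Q theta
   and positivity of P at M z - z one gets
       mu_f |z|^2 <= z^T Q z <= 2 z^T Q theta.
   Expanding 0 <= (mu_f z - 2 l_f theta)^T Q (mu_f z - 2 l_f theta) and using
   mu_f I <= Q <= l_f I then yields  mu_f |z| <= 2 l_f |theta|.  Hence
   beta_bar = max(0, theta_bar, 2 l_f / mu_f * theta_bar) works; it depends on
   mu_f, l_f and theta_bar only. *)

Local Notation form x M y := ((x^T *m M *m y) 0 0).
Local Notation sqnorm x := ((x^T *m x) 0 0).

Section QuadraticForms.
Context {R : comPzRingType} {n : nat}.
Implicit Types (x y : 'cV[R]_n) (M : 'M[R]_n).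

Lemma formD x y M1 M2 : form x (M1 + M2) y = form x M1 y + form x M2 y.
Proof. by rewrite mulmxDr mulmxDl mxE. Qed.

Lemma formB x y M1 M2 : form x (M1 - M2) y = form x M1 y - form x M2 y.
Proof. by rewrite mulmxBr mulmxBl !mxE. Qed.

Lemma form_scalar x y (a : R) : form x a%:M y = a * (x^T *m y) 0 0.
Proof. by rewrite mul_mx_scalar -scalemxAl mxE. Qed.

Lemma form_congr p x y (N : 'M[R]_(p, n)) (P : 'M[R]_p) :
  form x (N^T *m P *m N) y = form (N *m x) P (N *m y).
Proof. by rewrite trmx_mul !mulmxA. Qed.

Lemma form_congrl p x y (N : 'M[R]_(p, n)) (P : 'M[R]_(p, n)) :
  form x (N^T *m P) y = form (N *m x) P y.
Proof. by rewrite trmx_mul !mulmxA. Qed.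

Lemma form_sym x y M : M^T = M -> form x M y = form y M x.
Proof.
move=> MT; rewrite -[in LHS](trmxK (x^T *m M *m y)) [in LHS]mxE.
by rewrite !trmx_mul trmxK MT mulmxA.
Qed.

Lemma form_comb x y M (a b : R) :
  form (a *: x + b *: y) M (a *: x + b *: y) =
  a * a * form x M x + a * b * (form x M y + form y M x) + b * b * form y M y.
Proof.
rewrite [(_ + _)^T]linearD /= !linearZ /= !(mulmxDl, mulmxDr).
by rewrite -!scalemxAl !linearZ /= !mxE; ring.
Qed.

End QuadraticForms.

Section Positivity.
Context {R : rcfType} {n : nat}.
Implicit Types (x : 'cV[R]_n) (Q : 'M[R]_n).

Lemma sqnorm_ge0 x : 0 <= sqnorm x.
Proof. by rewrite mxE; apply: sumr_ge0 => i _; rewrite mxE -expr2 sqr_ge0. Qed.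

Lemma sqnorm_gt0 {x} : x != 0 -> 0 < sqnorm x.
Proof.
move=> xn0; rewrite lt_def sqnorm_ge0 andbT; apply: contra xn0 => /eqP.
have sq_ge0 i : true -> 0 <= x^T 0 i * x i 0 by rewrite mxE -expr2 sqr_ge0.
rewrite mxE => /(psumr_eq0P sq_ge0) x0; apply/eqP/matrixP => i j.
have := x0 i isT; rewrite (ord1 j) !mxE => xi0.
by apply/eqP; rewrite -sqrf_eq0 expr2 xi0.
Qed.

Lemma Qset_sym {mu l : R} {Q} : Qset mu l Q -> Q^T = Q.
Proof. by case=> -[_ []]. Qed.

Lemma Qset_lower {mu l : R} {Q} x : Qset mu l Q -> mu * sqnorm x <= form x Q x.
Proof. by case=> -[_ [_ /(_ x)]]; rewrite formB form_scalar subr_ge0. Qed.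

Lemma Qset_upper {mu l : R} {Q} x : Qset mu l Q -> form x Q x <= l * sqnorm x.
Proof. by case=> _ [_ [_ /(_ x)]]; rewrite formB form_scalar subr_ge0. Qed.

Lemma Qset_psd {mu l : R} {Q} x : 0 <= mu -> Qset mu l Q -> 0 <= form x Q x.
Proof.
move=> mu_ge0 /(Qset_lower x); apply: le_trans.
by rewrite mulr_ge0 ?sqnorm_ge0.
Qed.

Lemma posdef_psd {P : 'M[R]_n} x : posdef P -> 0 <= form x P x.
Proof.
case=> _ Ppos; have [->|xn0] := eqVneq x 0; last exact/ltW/Ppos.
by rewrite mulmx0 mxE.
Qed.

End Positivity.

Lemma ker0_unitmx (R : fieldType) (n : nat) (M : 'M[R]_n) :
  (forall v : 'cV[R]_n, M *m v = 0 -> v = 0) -> M \in unitmx.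
Proof.
move=> ker0; rewrite unitmxE unitfE -det_tr; apply/negP => /det0P [v vn0 vM].
have : v^T = 0 by apply: ker0; rewrite -[M]trmxK -trmx_mul vM trmx0.
by move/(congr1 trmx); rewrite trmxK trmx0 => v0; rewrite v0 eqxx in vn0.
Qed.

(* Completion of squares behind the DARE: for the gain K = Si B^T P A, where
   Si is a symmetric generalized inverse of R + B^T P B, the closed-loop cost
   (A - B K)^T P (A - B K) + K^T R K equals the Riccati term of the DARE. *)
Lemma riccati_lyapunov {R : comPzRingType} {n m : nat} (A : 'M[R]_n)
    {B : 'M[R]_(n, m)} {P : 'M[R]_n} {Rc Si : 'M[R]_m} :
  P^T = P -> Si^T = Si -> Si *m (Rc + B^T *m P *m B) *m Si = Si ->
  let K := Si *m B^T *m P *m A in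
  (A - B *m K)^T *m P *m (A - B *m K) + K^T *m Rc *m K
  = A^T *m (P - P *m B *m Si *m B^T *m P) *m A.
Proof.
move=> PT SiT Sgen K; rewrite /K.
have KT : (Si *m B^T *m P *m A)^T = A^T *m P *m B *m Si.
  by rewrite !trmx_mul trmxK PT SiT !mulmxA.
have sandwich : A^T *m P *m B *m (Si *m (Rc + B^T *m P *m B) *m Si) *m (B^T *m P *m A)
    = A^T *m P *m B *m Si *m (B^T *m P *m A) by rewrite Sgen.
rewrite !(mulmxDl, mulmxDr) !mulmxA in sandwich.
rewrite [(A - _)^T]linearB /= [(B *m _)^T]trmx_mul KT.
rewrite !(mulmxDl, mulmxDr, mulmxBl, mulmxBr, mulNmx, mulmxN, opprK) !mulmxA.
by rewrite -{2}sandwich opprD addrNK addrNK.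
Qed.

Section ClosedLoop.
Context {R : rcfType} {n m : nat} {A : 'M[R]_n} {B : 'M[R]_(n, m)}.
Context {Q : 'M[R]_n} {Rc : 'M[R]_m} {P : 'M[R]_n} {muf mug : R}.
Hypotheses (muf_gt0 : 0 < muf) (mug_gt0 : 0 < mug).
Hypothesis Q_lower : forall x : 'cV[R]_n, muf * sqnorm x <= form x Q x.
Hypothesis RcT : Rc^T = Rc.
Hypothesis Rc_lower : forall u : 'cV[R]_m, mug * sqnorm u <= form u Rc u.
Hypotheses (P_pd : posdef P) (dare : DARE A B Q Rc P).

Local Notation K := (Kgain A B Rc P).
Local Notation M := (A - B *m K).

Let PT : P^T = P. Proof. by case: P_pd. Qed.

Lemma Rc_psd (u : 'cV[R]_m) : 0 <= form u Rc u.
Proof. by apply: le_trans (Rc_lower u); rewrite mulr_ge0 ?sqnorm_ge0 // ltW. Qed.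

(* R + B^T P B is positive definite, hence invertible. *)
Lemma gain_denominator_unit : Rc + B^T *m P *m B \in unitmx.
Proof.
apply: ker0_unitmx => u Su0; apply/eqP; apply: contraT => un0.
have : form u (Rc + B^T *m P *m B) u = 0 by rewrite -mulmxA Su0 mulmx0 mxE.
rewrite formD form_congr; have := posdef_psd (B *m u) P_pd.
have := Rc_lower u; have := mulr_gt0 mug_gt0 (sqnorm_gt0 un0); lra.
Qed.

Lemma dare_lyapunov : P = Q + M^T *m P *m M + K^T *m Rc *m K.
Proof.
set S := Rc + B^T *m P *m B.
have SiT : (invmx S)^T = invmx S.
  by rewrite trmx_inv /S linearD /= !trmx_mul trmxK PT RcT mulmxA.
have Sgen : invmx S *m S *m invmx S = invmx S
  by rewrite mulVmx ?gain_denominator_unit // mul1mx.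
rewrite -addrA (riccati_lyapunov A PT SiT Sgen) {1}dare.
by rewrite [B^T *m P *m B + Rc]addrC.
Qed.

Lemma lyapunov_form (x : 'cV[R]_n) :
  form x P x = form x Q x + form (M *m x) P (M *m x) + form (K *m x) Rc (K *m x).
Proof. by rewrite {1}dare_lyapunov !formD !form_congr. Qed.

(* A fixed point of the closed loop would have zero stage cost, so 1 is not
   an eigenvalue of M and I - M^T is invertible. *)
Lemma closed_loop_unit : 1%:M - M^T \in unitmx.
Proof.
have -> : 1%:M - M^T = (1%:M - M)^T by rewrite [(1%:M - M)^T]linearB /= trmx1.
rewrite unitmx_tr; apply: ker0_unitmx => v Mv0.
apply/eqP; apply: contraT => vn0.
have Mv : M *m v = v.
  by apply/eqP; rewrite eq_sym -subr_eq0 -{1}[v]mul1mx -mulmxBl Mv0.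
have := lyapunov_form v; rewrite Mv; have := Q_lower v; have := Rc_psd (K *m v).
have := mulr_gt0 muf_gt0 (sqnorm_gt0 vn0); lra.
Qed.

Lemma P_unit : P \in unitmx.
Proof.
apply: ker0_unitmx => v Pv0; apply/eqP; apply: contraT => vn0.
by have := P_pd.2 v vn0; rewrite -mulmxA Pv0 mulmx0 mxE ltxx.
Qed.

(* Dissipation inequality for z = F(Q,R) theta: since (I - M^T) P z = Q theta,
   the Lyapunov identity and positivity of P at M z - z give
   mu_f |z|^2 <= z^T Q z <= 2 z^T Q theta. *)
Lemma Fmap_dissipation (theta : 'cV[R]_n) (z := Fmap A B Q Rc P *m theta) :
  muf * sqnorm z <= 2 * form z Q theta.
Proof.
set N := 1%:M - M^T.
have balance : (P - M^T *m P) *m z = Q *m theta.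
  have -> : P - M^T *m P = N *m P by rewrite mulmxBl mul1mx.
  rewrite /z /Fmap -/N -!mulmxA mulKVmx ?P_unit //.
  by rewrite mulKVmx ?closed_loop_unit.
clearbody z.
have energy : form z P z - form (M *m z) P z = form z Q theta.
  by rewrite -form_congrl -formB -mulmxA balance mulmxA.
have := posdef_psd (1 *: (M *m z) + (-1) *: z) P_pd.
rewrite form_comb (form_sym z _ _ PT).
have := lyapunov_form z; have := Q_lower z; have := Rc_psd (K *m z).
lra.
Qed.

End ClosedLoop.

(* mu_f I <= Q <= l_f I turns the dissipation inequality into the norm bound
   |z| <= 2 l_f / mu_f |theta|, via positivity of Q at mu_f z - 2 l_f theta. *)
Lemma dissipation_norm_bound {R : rcfType} {n : nat} {muf lf : R}
    {Q : 'M[R]_n} {z theta : 'cV[R]_n} :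
  0 < muf -> 0 < lf -> Qset muf lf Q ->
  muf * sqnorm z <= 2 * form z Q theta ->
  vnorm z <= 2 * lf / muf * vnorm theta.
Proof.
move=> muf_gt0 lf_gt0 HQ diss.
have sq_bound : muf ^+ 2 * sqnorm z <= (2 * lf) ^+ 2 * sqnorm theta.
  have := Qset_psd (muf *: z + (- (2 * lf)) *: theta) (ltW muf_gt0) HQ.
  rewrite form_comb (form_sym theta z _ (Qset_sym HQ)) => psd.
  have hz : muf ^+ 2 * form z Q z <= muf ^+ 2 * (lf * sqnorm z).
    by rewrite ler_wpM2l ?sqr_ge0 ?(Qset_upper z HQ).
  have ht : lf ^+ 2 * form theta Q theta <= lf ^+ 2 * (lf * sqnorm theta).
    by rewrite ler_wpM2l ?sqr_ge0 ?(Qset_upper theta HQ).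
  have hd : muf * lf * (muf * sqnorm z) <= muf * lf * (2 * form z Q theta).
    by rewrite ler_wpM2l // mulr_ge0 // ltW.
  rewrite -(ler_pM2l lf_gt0); lra.
have scale_sqrt (c a : R) : 0 <= c -> c * Num.sqrt a = Num.sqrt (c ^+ 2 * a).
  by move=> c_ge0; rewrite sqrtrM ?sqr_ge0 // sqrtr_sqr ger0_norm.
have lf2_ge0 : 0 <= 2 * lf by rewrite mulr_ge0 // ltW.
rewrite /vnorm mulrAC ler_pdivlMr // mulrC scale_sqrt ?(ltW muf_gt0) //.
by rewrite scale_sqrt // ler_sqrt // mulr_ge0 ?sqr_ge0 ?sqnorm_ge0.
Qed.

Theorem lemma8 (R : rcfType) (n m : nat) (A : 'M[R]_n) (B : 'M[R]_(n, m))
    (muf lf mug lg thetabar : R) :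
  0 < muf -> 0 < lf -> 0 < mug -> 0 < lg ->
  controllable A B ->
  exists betabar : R, 0 <= betabar /\
    forall (Q : 'M[R]_n) (Rc : 'M[R]_m) (P : 'M[R]_n) (theta : 'cV[R]_n),
      Qset muf lf Q -> Qset mug lg Rc ->
      vnorm theta <= thetabar ->
      is_Pe A B Q Rc P ->
      Num.max thetabar (vnorm (Fmap A B Q Rc P *m theta)) <= betabar.
Proof.
move=> muf_gt0 lf_gt0 mug_gt0 _ _.
exists (Num.max 0 (Num.max thetabar (2 * lf / muf * thetabar))).
split=> [|Q Rc P theta HQ HRc theta_le [P_pd dare]]; first by rewrite le_max lexx.
have diss := Fmap_dissipation muf_gt0 mug_gt0 (Qset_lower ^~ HQ)
  (Qset_sym HRc) (Qset_lower ^~ HRc) P_pd dare theta.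
have beta_le := dissipation_norm_bound muf_gt0 lf_gt0 HQ diss.
have gain_ge0 : 0 <= 2 * lf / muf by rewrite divr_ge0 ?mulr_ge0 // ltW.
have beta_bound := le_trans beta_le (ler_wpM2l gain_ge0 theta_le).
by rewrite ge_max !le_max lexx beta_bound !orbT.
Qed.
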